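(* Let $G$ be a finite group. Then $G/[\epsilon_i,G]$ is a nested GVZ-group for every integer $i\ge 1$. Moreover, $G$ is a nested GVZ-group if and only if $\epsilon_\infty=1$.
   Context: All groups are finite. For $\chi\in\mathrm{Irr}(G)$, the center of $\chi$ is $Z(\chi)=\{g\in G : |\chi(g)|=\chi(1)\}$. A group is nested if for any two of its irreducible characters $\chi,\psi$ either $Z(\chi)\le Z(\psi)$ or $Z(\psi)\le Z(\chi)$. A group is a GVZ-group if every irreducible character vanishes on the complement of its center. For a normal subgroup $N$ of $G$, $\mathrm{Irr}(G\mid N)$ is the set of $\chi\in\mathrm{Irr}(G)$ with $N\not\le\ker(\chi)$, and $V(G\mid N)$ is the subgroup generated by all $g\in G$ such that $\chi(g)\neq0$ for some $\chi\in\mathrm{Irr}(G\mid N)$ (so $V(G\mid 1)=1$). Define $\epsilon_1=G$ and $\epsilon_{i+1}=V(G\mid[\epsilon_i,G])$ for $i\ge1$. This is a descending chain of normal subgroups which stabilizes; $\epsilon_\infty$ denotes its terminal term. *)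

From mathcomp Require Import all_boot all_order all_algebra all_fingroup all_solvable all_field all_character.
Set Implicit Arguments. Unset Strict Implicit. Unset Printing Implicit Defensive.
Import GRing.Theory Num.Theory.
Local Open Scope ring_scope.

Definition nested (gT : finGroupType) (G : {group gT}) : Prop :=
  forall i j : Iirr G,
    ('Z('chi_i)%CF \subset 'Z('chi_j)%CF) \/ ('Z('chi_j)%CF \subset 'Z('chi_i)%CF).

Definition GVZ (gT : finGroupType) (G : {group gT}) : Prop :=
  forall (i : Iirr G) (g : gT), g \in G -> g \notin 'Z('chi_i)%CF -> 'chi_i g = 0%R.

(* V(G | N): subgroup generated by the g in G on which some chi in Irr(G|N)
   (i.e. with N not contained in ker chi) does not vanish. *)
Definition Vgrp (gT : finGroupType) (G : {group gT}) (N : {set gT}) : {set gT} :=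
  (<<[set g in G | [exists i : Iirr G, ~~ (N \subset cfker 'chi_i) && ('chi_i g != 0%R)]]>>)%g.

(* eps_rec G n is the paper's epsilon_{n+1}. *)
Fixpoint eps_rec (gT : finGroupType) (G : {group gT}) (n : nat) : {set gT} :=
  match n with
  | 0 => G
  | m.+1 => Vgrp G [~: eps_rec G m, G]%g
  end.

Definition epsilon (gT : finGroupType) (G : {group gT}) (i : nat) : {set gT} :=
  eps_rec G i.-1.

(* Terminal term of the (descending, eventually constant) chain: the chain
   is constant from index #|G|.+1 on. *)
Definition eps_infty (gT : finGroupType) (G : {group gT}) : {set gT} :=
  epsilon G #|G|.+1%N.

From mathcomp Require Import all_boot all_order all_algebra all_fingroup all_solvable all_field all_character.
Set Implicit Arguments. Unset Strict Implicit. Unset Printing Implicit Defensive.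
Import GroupScope.
Import GRing.Theory Num.Theory.

(* For an irreducible chi and E <= G, E <= Z(chi) iff [E, G] <= ker chi, since
   Z(chi)/ker chi = Z(G/ker chi).  Hence if [eps_n, G] <= ker chi but
   [eps_(n-1), G] is not, then eps_n = V(G | [eps_(n-1), G]) lies in Z(chi)
   and contains the support of chi, so Z(chi) = eps_n and chi vanishes off it.
   By induction every chi with [eps_i, G] <= ker chi is GVZ-like with center
   in the chain eps_1 >= eps_2 >= ..., which is totally ordered: this is the
   first claim, read in G/[eps_i, G].  Conversely, in a nested GVZ-group,
   a chi in Irr(G | [eps_oo, G]) with largest center would contain
   V(G | [eps_oo, G]) = eps_oo in its center, forcing [eps_oo, G] <= ker chi;
   so Irr(G | [eps_oo, G]) is empty and eps_oo = V(G | [eps_oo, G]) = 1. *)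

Lemma iter_fixed (T : finType) (F : {set T} -> {set T}) (A : {set T}) :
  (forall n, iter n.+1 F A \subset iter n F A) -> iter #|A|.+1 F A = iter #|A| F A.
Proof.
move=> decF.
have card_iter n : (forall k, k < n -> iter k.+1 F A != iter k F A) ->
    #|iter n F A| + n <= #|A|.
  elim: n => [|n IHn] neqF; first by rewrite addn0.
  rewrite addnS (leq_trans _ (IHn _)) ?ltn_add2r ?proper_card ?properEneq ?neqF ?decF //.
  by move=> k /ltnW; apply: neqF.
have [k le_kA fixk] : exists2 k, k <= #|A| & iter k.+1 F A = iter k F A.
  have [/existsP[k /eqP fixk] | /existsPn noFix] :=
    boolP [exists k : 'I_#|A|.+1, iter k.+1 F A == iter k F A].
    by exists k; rewrite // -ltnS ltn_ord.
  suff /card_iter : forall k, k < #|A|.+1 -> iter k.+1 F A != iter k F A.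
    by rewrite addnS ltnNge leq_addl.
  by move=> k lt_kA; apply: (noFix (Ordinal lt_kA)).
have fix_from n : iter (n + k) F A = iter k F A.
  by elim: n => // n IHn; rewrite addSn /= IHn.
by rewrite -(subnK le_kA) -addSn !fix_from.
Qed.

Section Vgrp.
Variables (gT : finGroupType) (G : {group gT}).
Local Open Scope ring_scope.

Lemma Vgrp_subG (H : {group gT}) (N : {set gT}) :
    (forall i g, ~~ (N \subset cfker 'chi[G]_i) -> g \in G -> 'chi_i g != 0 -> g \in H) ->
  Vgrp G N \subset H.
Proof.
move=> suppH; rewrite gen_subG; apply/subsetP=> g.
by rewrite inE => /andP[Gg /existsP[i /andP[nNi nz]]]; apply: suppH nNi Gg nz.
Qed.

Lemma mem_Vgrp (N : {set gT}) (i : Iirr G) g :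
  ~~ (N \subset cfker 'chi_i) -> g \in G -> 'chi_i g != 0 -> g \in Vgrp G N.
Proof.
by move=> nNi Gg nz; apply: mem_gen; rewrite inE Gg; apply/existsP; exists i; rewrite nNi.
Qed.

Lemma Vgrp_sub (N : {set gT}) : Vgrp G N \subset G.
Proof. exact: Vgrp_subG. Qed.

Lemma VgrpS (N M : {set gT}) : N \subset M -> Vgrp G N \subset Vgrp G M.
Proof.
move=> sNM; apply: Vgrp_subG => i g nNi; apply: mem_Vgrp.
by apply: contra nNi; apply: subset_trans.
Qed.

Lemma Vgrp_eq1 (N : {set gT}) :
  (forall i : Iirr G, N \subset cfker 'chi_i) -> Vgrp G N = 1%g.
Proof. by move=> sNker; apply/trivgP; apply: Vgrp_subG => i g; rewrite sNker. Qed.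

End Vgrp.

Section Cfcenter.
Variables (gT : finGroupType) (G : {group gT}).
Local Open Scope ring_scope.

Lemma irr_cfcenter_neq0 (i : Iirr G) g : g \in 'Z('chi_i)%CF -> 'chi_i g != 0.
Proof.
move=> Zg; have Gg := subsetP (cfcenter_sub 'chi_i) g Zg.
move: Zg; rewrite irr_cfcenterE // => /eqP normE.
by apply: contraNneq (irr1_neq0 i) => chi_g0; rewrite -normE chi_g0 normr0.
Qed.

Lemma cfcenter_comm_sub (phi : 'CF(G)) : [~: 'Z(phi)%CF, G] \subset cfker phi.
Proof.
have nKG := normal_norm (cfker_normal phi).
rewrite -quotient_cents2 ?(subset_trans (cfcenter_sub _)) //.
exact: subset_trans (cfcenter_subset_center phi) (subsetIr _ _).
Qed.

Lemma sub_cfcenter_comm (i : Iirr G) (E : {set gT}) :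
  E \subset G -> (E \subset 'Z('chi_i)%CF) = ([~: E, G] \subset cfker 'chi_i).
Proof.
move=> sEG; apply/idP/idP => [sEZ | cEker].
  exact: subset_trans (commSg G sEZ) (cfcenter_comm_sub _).
have nKG := normal_norm (cfker_normal 'chi_i).
have sKZ := normal_sub (cfker_center_normal 'chi_i).
rewrite -(quotientSGK (subset_trans sEG nKG) sKZ) cfcenter_eq_center.
by rewrite subsetI quotientS // quotient_cents2r.
Qed.

Section IrrVgrp.
Variables (N : {set gT}) (i : Iirr G).
Hypotheses (nNi : ~~ (N \subset cfker 'chi_i)) (cVi : [~: Vgrp G N, G] \subset cfker 'chi_i).

Let sVZ : Vgrp G N \subset 'Z('chi_i)%CF.
Proof. by rewrite sub_cfcenter_comm ?Vgrp_sub. Qed.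

Lemma irr_vanish_Vgrp : {in G, forall g, g \notin 'Z('chi_i)%CF -> 'chi_i g = 0}.
Proof.
move=> g Gg; apply: contraNeq => nz.
exact: subsetP sVZ g (mem_Vgrp nNi Gg nz).
Qed.

Lemma cfcenter_Vgrp : 'Z('chi_i)%CF = Vgrp G N.
Proof.
apply/eqP; rewrite eqEsubset sVZ andbT; apply/subsetP => g Zg.
exact: mem_Vgrp nNi (subsetP (cfcenter_sub _) g Zg) (irr_cfcenter_neq0 Zg).
Qed.

End IrrVgrp.

End Cfcenter.

Section EpsilonChain.
Variables (gT : finGroupType) (G : {group gT}).

Lemma eps_rec_group_set n : group_set (eps_rec G n).
Proof. by case: n => [|n] /=; apply: groupP. Qed.
Canonical eps_rec_group n := Group (eps_rec_group_set n).

Lemma eps_recE n : eps_rec G n = iter n (fun E => Vgrp G [~: E, G]) G.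
Proof. by elim: n => //= n ->. Qed.

Lemma eps_rec_sub n : eps_rec G n \subset G.
Proof. by case: n => [|n] //=; apply: Vgrp_sub. Qed.

Lemma eps_rec_subS n : eps_rec G n.+1 \subset eps_rec G n.
Proof.
elim: n => [|n IHn]; first exact: Vgrp_sub.
by rewrite [eps_rec G n.+2]/= VgrpS // commSg.
Qed.

Lemma eps_rec_sub_leq m n : m <= n -> eps_rec G n \subset eps_rec G m.
Proof.
move/subnK <-; elim: (n - m) => [|k IHk] //; rewrite addSn.
exact: subset_trans (eps_rec_subS _) IHk.
Qed.

Lemma eps_rec_total m n : eps_rec G m \subset eps_rec G n \/ eps_rec G n \subset eps_rec G m.
Proof.
by case: (leqP m n) => [le_mn | /ltnW le_nm]; [right | left]; apply: eps_rec_sub_leq.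
Qed.

Lemma eps_rec_fixed : eps_rec G #|G|.+1 = eps_rec G #|G|.
Proof.
rewrite !eps_recE; apply: iter_fixed => n.
by rewrite -!eps_recE eps_rec_subS.
Qed.

Lemma eps_rec_comm_normal n : [~: eps_rec G n, G] <| G.
Proof.
rewrite /normal commg_normr andbT commg_subr.
exact: subset_trans (eps_rec_sub n) (normG G).
Qed.

End EpsilonChain.

Section EpsilonCharacters.
Variables (gT : finGroupType) (G : {group gT}).
Local Open Scope ring_scope.

Lemma eps_rec_cfcenter n (i : Iirr G) :
    [~: eps_rec G n, G] \subset cfker 'chi_i ->
  {in G, forall g, g \notin 'Z('chi_i)%CF -> 'chi_i g = 0} /\
  exists m, 'Z('chi_i)%CF = eps_rec G m.
Proof.
elim: n i => [|n IHn] i cEi.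
  have sGZ : (G : {set gT}) \subset 'Z('chi_i)%CF by rewrite sub_cfcenter_comm.
  split; first by move=> g Gg; rewrite (subsetP sGZ g Gg).
  by exists 0%N; apply/eqP; rewrite eqEsubset cfcenter_sub.
have [/IHn // | nEi] := boolP ([~: eps_rec G n, G] \subset cfker 'chi_i).
split; first exact: irr_vanish_Vgrp nEi cEi.
by exists n.+1; apply: cfcenter_Vgrp nEi cEi.
Qed.

Lemma eps_rec_cfcenter_total n (a b : Iirr G) :
    [~: eps_rec G n, G] \subset cfker 'chi_a -> [~: eps_rec G n, G] \subset cfker 'chi_b ->
  'Z('chi_a)%CF \subset 'Z('chi_b)%CF \/ 'Z('chi_b)%CF \subset 'Z('chi_a)%CF.
Proof.
move=> /eps_rec_cfcenter[_ [m ->]] /eps_rec_cfcenter[_ [p ->]].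
exact: eps_rec_total.
Qed.

Lemma eps_rec_comm1_nested_GVZ n : [~: eps_rec G n, G] = 1%g -> nested G /\ GVZ G.
Proof.
move=> cE1; have cEker (a : Iirr G) : [~: eps_rec G n, G] \subset cfker 'chi_a.
  by rewrite cE1 sub1G.
split=> [a b | a]; first exact: eps_rec_cfcenter_total (cEker a) (cEker b).
by case: (eps_rec_cfcenter (cEker a)).
Qed.

End EpsilonCharacters.

Section Quotient.
Variables (gT : finGroupType) (G N : {group gT}).
Hypothesis nsNG : N <| G.
Local Open Scope ring_scope.

Lemma mem_cfcenter_mod (j : Iirr (G / N)) x : x \in G ->
  (x \in 'Z('chi_(mod_Iirr j))%CF) = (coset N x \in 'Z('chi_j)%CF).
Proof.
move=> Gx; rewrite irr_cfcenterE // irr_cfcenterE ?mem_quotient //.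
by rewrite mod_IirrE // cfModE // cfMod1.
Qed.

Lemma cfcenter_mod_Iirr (j : Iirr (G / N)) :
  ('Z('chi_(mod_Iirr j))%CF / N)%g = 'Z('chi_j)%CF.
Proof.
apply/setP=> y; apply/idP/idP => [/morphimP[x _ Zx ->] | Zy].
  by rewrite -mem_cfcenter_mod // (subsetP (cfcenter_sub _) x Zx).
have /morphimP[x _ Gx def_y] := subsetP (cfcenter_sub _) y Zy.
have Zx : x \in 'Z('chi_(mod_Iirr j))%CF by rewrite mem_cfcenter_mod // -def_y.
by rewrite def_y; apply: mem_quotient.
Qed.

Lemma mod_Iirr_ker (j : Iirr (G / N)) : N \subset cfker 'chi_(mod_Iirr j).
Proof. by rewrite mod_IirrE // cfker_mod. Qed.

Lemma nested_quotient :
    (forall a b : Iirr G, N \subset cfker 'chi_a -> N \subset cfker 'chi_b ->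
     'Z('chi_a)%CF \subset 'Z('chi_b)%CF \/ 'Z('chi_b)%CF \subset 'Z('chi_a)%CF) ->
  nested (G / N)%G.
Proof.
move=> nestedN j k; rewrite -!cfcenter_mod_Iirr.
by case: (nestedN _ _ (mod_Iirr_ker j) (mod_Iirr_ker k)) => sZ; [left | right];
  apply: quotientS.
Qed.

Lemma GVZ_quotient :
    (forall a : Iirr G, N \subset cfker 'chi_a ->
     {in G, forall g, g \notin 'Z('chi_a)%CF -> 'chi_a g = 0}) ->
  GVZ (G / N)%G.
Proof.
move=> vanishN j _ /morphimP[x _ Gx ->]; rewrite -mem_cfcenter_mod // => nZx.
by rewrite -(cfModE _ nsNG Gx) -mod_IirrE // vanishN // mod_Iirr_ker.
Qed.

End Quotient.

Section NestedGVZ.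
Variables (gT : finGroupType) (G : {group gT}).
Hypotheses (nestedG : nested G) (GVZ_G : GVZ G).
Local Open Scope ring_scope.

(* Choose chi in Irr(G | N) with largest center: nestedness makes it contain
   the centers, hence (GVZ) the supports, of all of Irr(G | N). *)
Lemma nested_GVZ_Vgrp_sub_cfcenter (N : {set gT}) (i0 : Iirr G) :
    ~~ (N \subset cfker 'chi_i0) ->
  exists2 i : Iirr G, ~~ (N \subset cfker 'chi_i) & Vgrp G N \subset 'Z('chi_i)%CF.
Proof.
move=> nNi0; pose irrN i := ~~ (N \subset cfker 'chi[G]_i).
have [i nNi maxZi] := @arg_maxnP _ i0 irrN (fun i : Iirr G => #|'Z('chi_i)%CF|) nNi0.
exists i => //; apply: Vgrp_subG => j g nNj Gg nz.
have sZji : 'Z('chi_j)%CF \subset 'Z('chi_i)%CF.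
  case: (nestedG j i) => // sZij.
  by have /eqP <- : 'Z('chi_i)%CF == 'Z('chi_j)%CF by rewrite eqEcard sZij; apply: maxZi.
apply: (subsetP sZji); apply: contraR nz => nZg; apply/eqP; exact: GVZ_G.
Qed.

Lemma nested_GVZ_eps_infty : eps_infty G = 1%g.
Proof.
rewrite /eps_infty /epsilon /= -eps_rec_fixed /=; apply: Vgrp_eq1 => i.
apply/negPn/negP => /nested_GVZ_Vgrp_sub_cfcenter[j nEj sVZ].
by case/negP: nEj; rewrite -sub_cfcenter_comm ?eps_rec_sub // -{1}eps_rec_fixed.
Qed.

End NestedGVZ.

Theorem theoremJ (gT : finGroupType) (G : {group gT}) :
  (forall i : nat, 1 <= i ->
     nested (G / [~: epsilon G i, G])%G /\ GVZ (G / [~: epsilon G i, G])%G) /\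
  ((nested G /\ GVZ G) <-> eps_infty G = 1).
Proof.
split=> [i _ | ].
  have nsNG := eps_rec_comm_normal G i.-1.
  split; [apply: nested_quotient | apply: GVZ_quotient] => // a.
    exact: eps_rec_cfcenter_total.
  by case/eps_rec_cfcenter.
split=> [[nestedG GVZ_G] | eps_oo1]; first exact: nested_GVZ_eps_infty.
apply: (@eps_rec_comm1_nested_GVZ _ _ #|G|).
by rewrite -[eps_rec G _]/(eps_infty G) eps_oo1 comm1G.
Qed.
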